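(* Consider the network and loss $\mathcal{L}$ from the context. If $\mathbf{P}\in\mathbb{R}^D$ is such that there exist $i\in I$ and $k\in K$ with $\rho(\mathbf{w}_i\cdot\mathbf{x}_k)\ne0$, then $\mathbf{P}$ is not a local maximum of $\mathcal{L}$.
   Context: Fix an integer $d>1$, finite index sets $I$ (hidden neurons), $J$ (output neurons), $K$ (samples), reals $\alpha^+\neq\alpha^-$, and $\rho(z)=\alpha^+z$ for $z\ge0$, $\rho(z)=\alpha^-z$ for $z<0$ (componentwise). Parameters $\mathbf{P}=(W,H)\in\mathbb{R}^D$, $D=|J||I|+|I|d$, with $W\in\mathbb{R}^{|I|\times d}$ having rows $\mathbf{w}_i$ and $H=(h_{ji})\in\mathbb{R}^{|J|\times|I|}$; output $\hat{\mathbf{y}}(\mathbf{P};\mathbf{x})=H\rho(W\mathbf{x})$; training data $\mathbf{x}_k\in\mathbb{R}^d$, $\mathbf{y}_k\in\mathbb{R}^{|J|}$; loss $\mathcal{L}(\mathbf{P})=\frac12\sum_{k\in K}\|\hat{\mathbf{y}}(\mathbf{P};\mathbf{x}_k)-\mathbf{y}_k\|^2$. *)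

From HB Require Import structures.
From mathcomp Require Import all_boot all_order all_algebra.
Set Implicit Arguments. Unset Strict Implicit. Unset Printing Implicit Defensive.
Import Order.TTheory GRing.Theory Num.Theory.
Local Open Scope ring_scope.

(* Index sets: I = 'I_nI (hidden), J = 'I_nJ (outputs), K = 'I_nK (samples). *)

Definition rho {R : realFieldType} (ap am : R) (z : R) : R :=
  if 0 <= z then ap * z else am * z.

Definition dotrow {R : realFieldType} {nI d : nat}
  (W : 'M[R]_(nI, d)) (i : 'I_nI) (x : 'cV[R]_d) : R :=
  \sum_(l < d) W i l * x l 0.

Definition net_out {R : realFieldType} (ap am : R) {nI nJ d : nat}
  (W : 'M[R]_(nI, d)) (H : 'M[R]_(nJ, nI)) (x : 'cV[R]_d) (j : 'I_nJ) : R :=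
  \sum_(i < nI) H j i * rho ap am (dotrow W i x).

Definition loss {R : realFieldType} (ap am : R) {nI nJ nK d : nat}
  (xs : 'I_nK -> 'cV[R]_d) (ys : 'I_nK -> 'cV[R]_nJ)
  (W : 'M[R]_(nI, d)) (H : 'M[R]_(nJ, nI)) : R :=
  2^-1 * \sum_(k < nK) \sum_(j < nJ) (net_out ap am W H (xs k) j - ys k j 0) ^+ 2.

Definition local_max {R : realFieldType} {nI nJ d : nat}
  (f : 'M[R]_(nI, d) -> 'M[R]_(nJ, nI) -> R)
  (W : 'M[R]_(nI, d)) (H : 'M[R]_(nJ, nI)) : Prop :=
  exists e : R, 0 < e /\
    forall (W' : 'M[R]_(nI, d)) (H' : 'M[R]_(nJ, nI)),
      (forall i l, `|W' i l - W i l| < e) ->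
      (forall j i, `|H' j i - H j i| < e) ->
      f W' H' <= f W H.

From HB Require Import structures.
From mathcomp Require Import all_boot all_order all_algebra.
From mathcomp Require Import ring lra.
Import Order.TTheory GRing.Theory Num.Theory.
Local Open Scope ring_scope.

(* Moving a single output weight h_ji by t or by -t (i.e. H +- t E with E the
   matrix unit at (j, i)) changes the residuals by +-t rho(w_i . x_k) in
   coordinate j, so by the parallelogram identity
   L(H + tE) + L(H - tE) = 2 L(H) + t^2 sum_k rho(w_i . x_k)^2, and the last
   term is positive as soon as some rho(w_i . x_k) is nonzero.  Hence one of
   the two perturbations strictly increases the loss, arbitrarily close to P. *)

Lemma sum_delta_sqr (R : pzRingType) (n : nat) (j : 'I_n) (c : R) :
  \sum_(j' < n) ((j' == j)%:R * c) ^+ 2 = c ^+ 2.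
Proof.
rewrite (bigD1 j) //= eqxx mul1r big1 ?addr0 //.
by move=> j' /negbTE ->; rewrite mul0r expr0n.
Qed.

Lemma sumr_sqr_gt0 {R : realDomainType} {n : nat} (F : 'I_n -> R) (k : 'I_n) :
  F k != 0 -> 0 < \sum_(k' < n) F k' ^+ 2.
Proof.
move=> Fk_neq0; rewrite (bigD1 k) //= ltr_pwDl ?exprn_even_gt0 //.
by apply: sumr_ge0 => k' _; rewrite sqr_ge0.
Qed.

Lemma norm_addZdelta_sub {R : numDomainType} {m n : nat}
    (A : 'M[R]_(m, n)) (i : 'I_m) (j : 'I_n) (s : R) i' j' :
  `|(A + s *: delta_mx i j) i' j' - A i' j'| <= `|s|.
Proof.
rewrite !mxE addrAC subrr add0r normrM.
by case: (_ && _); rewrite ?normr1 ?normr0 ?mulr1 ?mulr0.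
Qed.

Section OutputWeightPerturbation.
Context {R : realFieldType} (ap am : R) {d nI nJ nK : nat}.
Context (xs : 'I_nK -> 'cV[R]_d) (ys : 'I_nK -> 'cV[R]_nJ).
Context (W : 'M[R]_(nI, d)) (H : 'M[R]_(nJ, nI)) (j : 'I_nJ) (i : 'I_nI).

Lemma net_out_addZdelta t x j' :
  net_out ap am W (H + t *: delta_mx j i) x j' =
  net_out ap am W H x j' + (j' == j)%:R * (t * rho ap am (dotrow W i x)).
Proof.
rewrite /net_out; under eq_bigr => b _ do rewrite !mxE mulrDl.
rewrite big_split /=; congr (_ + _).
rewrite (bigD1 i) //= big1 ?addr0; last first.
  by move=> b /negbTE ->; rewrite andbF mulr0 mul0r.
by rewrite eqxx andbT mulrCA mulrA.
Qed.

Lemma loss_addZdelta_addNZdelta t :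
  loss ap am xs ys W (H + t *: delta_mx j i) +
  loss ap am xs ys W (H - t *: delta_mx j i) =
  2 * loss ap am xs ys W H + \sum_(k < nK) (t * rho ap am (dotrow W i (xs k))) ^+ 2.
Proof.
have parallelogram k j' :
    (net_out ap am W (H + t *: delta_mx j i) (xs k) j' - ys k j' 0) ^+ 2 +
    (net_out ap am W (H - t *: delta_mx j i) (xs k) j' - ys k j' 0) ^+ 2 =
    2 * (net_out ap am W H (xs k) j' - ys k j' 0) ^+ 2 +
    2 * ((j' == j)%:R * (t * rho ap am (dotrow W i (xs k)))) ^+ 2.
  by rewrite -scaleNr !net_out_addZdelta; ring.
have per_sample k :
    \sum_(j' < nJ) (net_out ap am W (H + t *: delta_mx j i) (xs k) j' - ys k j' 0) ^+ 2 +
    \sum_(j' < nJ) (net_out ap am W (H - t *: delta_mx j i) (xs k) j' - ys k j' 0) ^+ 2 =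
    2 * \sum_(j' < nJ) (net_out ap am W H (xs k) j' - ys k j' 0) ^+ 2 +
    2 * (t * rho ap am (dotrow W i (xs k))) ^+ 2.
  rewrite -big_split /= (eq_bigr _ (fun j' _ => parallelogram k j')).
  by rewrite big_split /= -!mulr_sumr sum_delta_sqr.
rewrite /loss -mulrDr -big_split /= (eq_bigr _ (fun k _ => per_sample k)).
rewrite big_split /= -!mulr_sumr; lra.
Qed.

End OutputWeightPerturbation.

Theorem theorem2 (R : realFieldType) (d nI nJ nK : nat) (ap am : R)
  (xs : 'I_nK -> 'cV[R]_d) (ys : 'I_nK -> 'cV[R]_nJ)
  (W : 'M[R]_(nI, d)) (H : 'M[R]_(nJ, nI)) :
  (1 < d)%N -> (0 < nJ)%N -> ap != am ->
  (exists (i : 'I_nI) (k : 'I_nK), rho ap am (dotrow W i (xs k)) != 0) ->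
  ~ local_max (loss ap am xs ys) W H.
Proof.
move=> _ nJ_gt0 _ [i [k rho_neq0]] [e [e_gt0 maxP]].
pose j := Ordinal nJ_gt0; pose t := e / 2.
have t_gt0 : 0 < t by rewrite divr_gt0.
have t_lt_e : t < e by rewrite /t; lra.
have W_near a b : `|W a b - W a b| < e by rewrite subrr normr0.
have H_near s : `|s| = t -> forall j' i',
    `|(H + s *: delta_mx j i) j' i' - H j' i'| < e.
  by move=> s_t j' i'; rewrite (le_lt_trans (norm_addZdelta_sub H j i s j' i')) ?s_t.
have norm_t : `|t| = t by rewrite gtr0_norm.
have le_plus := maxP _ _ W_near (H_near t norm_t).
have le_minus := maxP _ _ W_near (H_near (- t) (etrans (normrN t) norm_t)).
rewrite scaleNr in le_minus.
have gap_gt0 : 0 < \sum_(k' < nK) (t * rho ap am (dotrow W i (xs k'))) ^+ 2.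
  by apply: (sumr_sqr_gt0 _ k); rewrite mulf_neq0 ?(gt_eqF t_gt0).
have := loss_addZdelta_addNZdelta ap am xs ys W H j i t; lra.
Qed.
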